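(* Let $\Lambda=(W_j,\Lambda_j,v_j)_{j\in\mathbb{J}}$ be a g-fusion frame for $H$ with g-fusion frame operator $S_\Lambda$, let $\tilde W_j:=S_\Lambda^{-1}W_j$, $\tilde\Lambda_j:=\Lambda_j\pi_{W_j}S_\Lambda^{-1}$, let $\mathbb{I}\subseteq\mathbb{J}$, $\mathbb{I}^c=\mathbb{J}\setminus\mathbb{I}$, and for $\mathbb{K}\subseteq\mathbb{J}$ set $M_{\mathbb{K}}f:=\sum_{j\in\mathbb{K}}v_j^2\pi_{W_j}\Lambda_j^*\Lambda_j\pi_{W_j}f$. Then for every $f\in H$, $$\sum_{j\in\mathbb{I}}v_j^2\Vert\Lambda_j\pi_{W_j}f\Vert^2-\sum_{j\in\mathbb{J}}v_j^2\Vert\tilde{\Lambda}_j\pi_{\tilde{W}_j}M_{\mathbb{I}}f\Vert^2=\sum_{j\in\mathbb{I}^c}v_j^2\Vert\Lambda_j\pi_{W_j}f\Vert^2-\sum_{j\in\mathbb{J}}v_j^2\Vert\tilde{\Lambda}_j\pi_{\tilde{W}_j}M_{\mathbb{I}^c}f\Vert^2.$$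
   Context: $H$ is a separable Hilbert space, $\mathbb{J}\subseteq\mathbb{Z}$, $\{H_j\}_{j\in\mathbb{J}}$ are separable Hilbert spaces, $\Lambda_j\in\mathcal{B}(H,H_j)$, $W_j$ are closed subspaces of $H$, $v_j>0$, and $\pi_V$ denotes the orthogonal projection onto a closed subspace $V$. The triple $\Lambda=(W_j,\Lambda_j,v_j)$ is a g-fusion frame for $H$ if there exist $0<A\le B<\infty$ with $A\Vert f\Vert^2\le\sum_{j\in\mathbb{J}}v_j^2\Vert\Lambda_j\pi_{W_j}f\Vert^2\le B\Vert f\Vert^2$ for all $f\in H$. Its g-fusion frame operator $S_\Lambda f=\sum_{j\in\mathbb{J}}v_j^2\pi_{W_j}\Lambda_j^*\Lambda_j\pi_{W_j}f$ is bounded, positive and invertible; $(\tilde W_j,\tilde\Lambda_j,v_j)$ is the canonical dual g-fusion frame. *)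

From HB Require Import structures.
From mathcomp Require Import all_boot all_order all_algebra.
From mathcomp Require Import all_classical all_reals.
From mathcomp Require Import ereal esum.
From mathcomp Require Import complex.

Set Implicit Arguments.
Unset Strict Implicit.
Unset Printing Implicit Defensive.

Import Order.TTheory GRing.Theory Num.Theory.
Local Open Scope ring_scope.
Local Open Scope classical_set_scope.

Section HilbertDefs.
Variable R : realType.
Local Notation C := R[i].

Definition is_inner_product (V : lmodType C) (ip : V -> V -> C) : Prop :=
  [/\ (forall (a : C) (x y z : V), ip (a *: x + y) z = a * ip x z + ip y z),
      (forall x y : V, ip y x = Num.conj (ip x y)),
      (forall x : V, 0 <= ip x x) &
      (forall x : V, ip x x = 0 -> x = 0)].

Definition ipnorm (V : lmodType C) (ip : V -> V -> C) (x : V) : R :=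
  Num.sqrt (complex.Re (ip x x)).

Definition ip_complete (V : lmodType C) (ip : V -> V -> C) : Prop :=
  forall u : nat -> V,
    (forall e : R, 0 < e -> exists N : nat, forall m n : nat,
        (N <= m)%N -> (N <= n)%N -> ipnorm ip (u m - u n) < e) ->
    exists x : V, forall e : R, 0 < e -> exists N : nat, forall n : nat,
        (N <= n)%N -> ipnorm ip (u n - x) < e.

Definition ip_separable (V : lmodType C) (ip : V -> V -> C) : Prop :=
  exists d : nat -> V, forall (x : V) (e : R), 0 < e ->
    exists n : nat, ipnorm ip (x - d n) < e.

Definition separable_hilbert (V : lmodType C) (ip : V -> V -> C) : Prop :=
  [/\ is_inner_product ip, ip_complete ip & ip_separable ip].

Definition closed_subspace (V : lmodType C) (ip : V -> V -> C) (W : set V) : Prop :=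
  [/\ W 0,
      (forall (a : C) (x y : V), W x -> W y -> W (a *: x + y)) &
      (forall x : V, (forall e : R, 0 < e -> exists2 w, W w & ipnorm ip (x - w) < e) ->
          W x)].

Definition is_orth_proj (V : lmodType C) (ip : V -> V -> C) (W : set V) (P : V -> V) : Prop :=
  forall x : V, W (P x) /\ forall w : V, W w -> ip (x - P x) w = 0.

Definition bounded_op (U V : lmodType C) (ipU : U -> U -> C) (ipV : V -> V -> C)
  (T : U -> V) : Prop :=
  exists c : R, forall x : U, ipnorm ipV (T x) <= c * ipnorm ipU x.

Definition is_adjoint (U V : lmodType C) (ipU : U -> U -> C) (ipV : V -> V -> C)
  (T : U -> V) (T' : V -> U) : Prop :=
  forall (x : U) (y : V), ipV (T x) y = ipU x (T' y).

(* unconditional (net of finite partial sums) convergence of sum_{j in K} F j to s *)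
Definition has_usum (V : lmodType C) (ip : V -> V -> C) (K : set int)
  (F : int -> V) (s : V) : Prop :=
  forall e : R, 0 < e -> exists F0 : seq int, {subset F0 <= K} /\
    forall G : seq int, uniq G -> {subset F0 <= G} -> {subset G <= K} ->
      ipnorm ip (s - \sum_(j <- G) F j) < e.

(* The triple (W_j, Lambda_j, v_j)_{j in J} is a g-fusion frame for H
   (P j is the orthogonal projection onto W j, supplied separately). *)
Definition g_fusion_frame (H : lmodType C) (ip : H -> H -> C)
  (Hj : int -> lmodType C) (ipj : forall j, Hj j -> Hj j -> C)
  (J : set int) (P : int -> H -> H) (L : forall j, H -> Hj j) (v : int -> R) : Prop :=
  exists A B : R, [/\ 0 < A, A <= B &
    forall f : H,
      ((A * ipnorm ip f ^+ 2)%:E <=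
         \esum_(j in J) ((v j ^+ 2 * ipnorm (ipj j) (L j (P j f)) ^+ 2)%:E))%E /      (\esum_(j in J) ((v j ^+ 2 * ipnorm (ipj j) (L j (P j f)) ^+ 2)%:E) <=
         (B * ipnorm ip f ^+ 2)%:E)%E].

Definition rC (a : R) : C := Complex a 0.

End HilbertDefs.

From HB Require Import structures.
From mathcomp Require Import all_boot all_order all_algebra.
From mathcomp Require Import all_classical all_reals.
From mathcomp Require Import ereal esum.
From mathcomp Require Import complex.
From mathcomp Require Import lra.

(* Write T_K f = sum_(j in K) v_j^2 pi_(W_j) Lambda_j^* Lambda_j pi_(W_j) f, so
   that S = T_J = M_I + M_(I^c) and sum_(j in K) v_j^2 |Lambda_j pi_(W_j) f|^2
   = <T_K f, f>.  Since S^-1 is self-adjoint, it maps the orthogonal complement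
   of S^-1 W_j into that of W_j, hence Lambda_j pi_(W_j) S^-1 pi_(S^-1 W_j)
   = Lambda_j pi_(W_j) S^-1 and the dual sum at z is <S S^-1 z, S^-1 z>
   = <z, S^-1 z>.  Writing f = S^-1 M_I f + S^-1 M_(I^c) f, the left side
   becomes <M_I f, S^-1 M_(I^c) f> and the right side <M_(I^c) f, S^-1 M_I f>,
   which agree by self-adjointness again. *)

Import Order.TTheory GRing.Theory Num.Theory.
Local Open Scope ring_scope.
Local Open Scope classical_set_scope.
Set Implicit Arguments.
Unset Strict Implicit.

Section RealInnerProduct.
Variables (R : realType) (V : lmodType R[i]) (ip : V -> V -> R[i]).
Hypothesis ip_inner : is_inner_product ip.

Definition rip (x y : V) : R := complex.Re (ip x y).

Lemma ReD (z w : R[i]) : complex.Re (z + w) = complex.Re z + complex.Re w.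
Proof. by case: z => a b; case: w. Qed.

Lemma ReN (z : R[i]) : complex.Re (- z) = - complex.Re z.
Proof. by case: z. Qed.

Lemma ReJ (z : R[i]) : complex.Re (Num.conj z) = complex.Re z.
Proof. by case: z. Qed.

Lemma Re_rCM (a : R) (z : R[i]) : complex.Re (rC a * z) = a * complex.Re z.
Proof. by case: z => c d /=; rewrite mul0r subr0. Qed.

Lemma ip0l z : ip 0 z = 0.
Proof.
case: ip_inner => ipl _ _ _; have := ipl 1 0 0 z.
by rewrite scaler0 addr0 mul1r => h; apply: (addrI (ip 0 z)); rewrite addr0 -h.
Qed.

Lemma ipDl x y z : ip (x + y) z = ip x z + ip y z.
Proof. by case: ip_inner => ipl _ _ _; rewrite -[x]scale1r ipl mul1r scale1r. Qed.

Lemma ipZl a x z : ip (a *: x) z = a * ip x z.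
Proof.
by case: ip_inner => ipl _ _ _; rewrite -[a *: x]addr0 ipl ip0l addr0.
Qed.

Lemma ipNl x z : ip (- x) z = - ip x z.
Proof. by rewrite -scaleN1r ipZl mulN1r. Qed.

Lemma ripC x y : rip x y = rip y x.
Proof. by case: ip_inner => _ ipJ _ _; rewrite /rip ipJ ReJ. Qed.

Lemma ripDl x y z : rip (x + y) z = rip x z + rip y z.
Proof. by rewrite /rip ipDl ReD. Qed.

Lemma ripBl x y z : rip (x - y) z = rip x z - rip y z.
Proof. by rewrite /rip ipDl ipNl ReD ReN. Qed.

Lemma ripZl a x z : rip (rC a *: x) z = a * rip x z.
Proof. by rewrite /rip ipZl Re_rCM. Qed.

Lemma rip0l z : rip 0 z = 0.
Proof. by rewrite /rip ip0l. Qed.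

Lemma ripDr x y z : rip z (x + y) = rip z x + rip z y.
Proof. by rewrite ripC ripDl !(ripC z). Qed.

Lemma ripBr x y z : rip z (x - y) = rip z x - rip z y.
Proof. by rewrite ripC ripBl !(ripC z). Qed.

Lemma ripZr a x z : rip z (rC a *: x) = a * rip z x.
Proof. by rewrite ripC ripZl ripC. Qed.

Lemma rip_suml (G : seq int) (F : int -> V) z :
  rip (\sum_(j <- G) F j) z = \sum_(j <- G) rip (F j) z.
Proof.
elim: G => [|a G IH]; first by rewrite !big_nil rip0l.
by rewrite !big_cons ripDl IH.
Qed.

Lemma rip_ge0 x : 0 <= rip x x.
Proof. by case: ip_inner => _ _ ip_ge0 _; move: (ip_ge0 x); rewrite lecE => /andP[]. Qed.

Lemma rip_eq0 x : rip x x = 0 -> x = 0.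
Proof.
case: ip_inner => _ _ ip_ge0 ip_eq0 rx0; apply: ip_eq0.
move: (ger0_Im (ip_ge0 x)) rx0; rewrite /rip.
by case: (ip x x) => a b /= -> ->.
Qed.

Lemma rip_ext x x' : (forall y, rip x y = rip x' y) -> x = x'.
Proof.
move=> xx'; apply/eqP; rewrite -subr_eq0; apply/eqP/rip_eq0.
by rewrite ripBl xx' subrr.
Qed.

Lemma ipnorm2 x : ipnorm ip x ^+ 2 = rip x x.
Proof. by rewrite /ipnorm sqr_sqrtr // rip_ge0. Qed.

Lemma rip_sqr_le x y : rip x y ^+ 2 <= rip x x * rip y y.
Proof.
have quad s : 0 <= rip x x - 2 * s * rip x y + s ^+ 2 * rip y y.
  have := rip_ge0 (x - rC s *: y).
  by rewrite ripBl !ripBr !ripZl !ripZr (ripC y x); nra.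
have [/rip_eq0 -> | y0] := eqVneq (rip y y) 0.
  by rewrite ripC rip0l rip0l expr0n mulr0.
have c0 : 0 < rip y y by rewrite lt0r y0 rip_ge0.
(* evaluate [quad] at its minimiser *)
have := quad (rip x y / rip y y); have := divfK y0 (rip x y); nra.
Qed.

Lemma normr_rip_le x y : `|rip x y| <= ipnorm ip x * ipnorm ip y.
Proof.
rewrite /ipnorm -sqrtrM ?rip_ge0 // -sqrtr_sqr ler_sqrt ?mulr_ge0 ?rip_ge0 //.
exact: rip_sqr_le.
Qed.

End RealInnerProduct.

Section RealUnconditionalSums.
Variable R : realType.

Definition has_rsum (K : set int) (c : int -> R) (s : R) : Prop :=
  forall e : R, 0 < e -> exists F0 : seq int, {subset F0 <= K} /\
    forall G : seq int, uniq G -> {subset F0 <= G} -> {subset G <= K} ->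
      `|s - \sum_(j <- G) c j| < e.

Lemma rsum_unique K c a b : has_rsum K c a -> has_rsum K c b -> a = b.
Proof.
move=> ha hb; apply/eqP; rewrite -subr_eq0 -normr_le0.
apply/ler_addgt0Pr => e e0; rewrite add0r.
have e20 : 0 < e / 2 by rewrite divr_gt0.
have [F1 [F1K h1]] := ha _ e20; have [F2 [F2K h2]] := hb _ e20.
set G := undup (F1 ++ F2).
have GK : {subset G <= K}.
  by move=> x; rewrite mem_undup mem_cat => /orP[/F1K|/F2K].
have F1G : {subset F1 <= G} by move=> x xF; rewrite mem_undup mem_cat xF.
have F2G : {subset F2 <= G} by move=> x xF; rewrite mem_undup mem_cat xF orbT.
have := h1 G (undup_uniq _) F1G GK; have := h2 G (undup_uniq _) F2G GK.
set t := \sum_(j <- G) c j => hb' ha'.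
have -> : a - b = (a - t) - (b - t) by rewrite opprB addrA subrK.
apply: le_trans (ler_normB _ _) _.
by rewrite (splitr e); apply: ltW; apply: ltrD.
Qed.

Lemma eq_rsum K c d s : (forall j, K j -> c j = d j) ->
  has_rsum K c s -> has_rsum K d s.
Proof.
move=> cd hc e e0; have [F0 [F0K h]] := hc e e0; exists F0; split => // G uG FG GK.
rewrite (_ : \sum_(j <- G) d j = \sum_(j <- G) c j); first exact: h.
rewrite big_seq_cond [RHS]big_seq_cond; apply: eq_bigr => j /andP[jG _].
by rewrite cd //; move: (GK j jG); rewrite in_setE.
Qed.

Lemma rsumD K c d a b : has_rsum K c a -> has_rsum K d b ->
  has_rsum K (fun j => c j + d j) (a + b).
Proof.
move=> ha hb e e0.
have e20 : 0 < e / 2 by rewrite divr_gt0.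
have [F1 [F1K h1]] := ha _ e20; have [F2 [F2K h2]] := hb _ e20.
exists (F1 ++ F2); split.
  by move=> x; rewrite mem_cat => /orP[/F1K|/F2K].
move=> G uG FG GK.
have F1G : {subset F1 <= G} by move=> x xF; apply: FG; rewrite mem_cat xF.
have F2G : {subset F2 <= G} by move=> x xF; apply: FG; rewrite mem_cat xF orbT.
have := h1 G uG F1G GK; have := h2 G uG F2G GK => hb' ha'.
rewrite big_split /= opprD addrACA.
apply: le_lt_trans (ler_normD _ _) _.
by rewrite (splitr e); apply: ltrD.
Qed.

Lemma rsum_setD I J c a b : I `<=` J -> has_rsum I c a -> has_rsum (J `\` I) c b ->
  has_rsum J c (a + b).
Proof.
move=> IJ ha hb e e0.
have e20 : 0 < e / 2 by rewrite divr_gt0.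
have [F1 [F1K h1]] := ha _ e20; have [F2 [F2K h2]] := hb _ e20.
exists (F1 ++ F2); split.
  move=> x; rewrite mem_cat => /orP[/F1K|/F2K]; rewrite !in_setE; first exact: IJ.
  by case.
move=> G uG FG GK; set p := fun j : int => `[< I j >].
rewrite -(perm_big _ (permEl (perm_filterC p G))) big_cat /=.
have F1G : {subset F1 <= seq.filter p G}.
  move=> x xF; rewrite mem_filter FG ?mem_cat ?xF // andbT /p.
  by apply/asboolP; move: (F1K x xF); rewrite in_setE.
have F2G : {subset F2 <= seq.filter (predC p) G}.
  move=> x xF; rewrite mem_filter FG ?mem_cat ?xF ?orbT // andbT /= /p.
  by apply/negP => /asboolP; move: (F2K x xF); rewrite in_setE => -[].
have G1I : {subset seq.filter p G <= I}.
  by move=> x; rewrite mem_filter /p => /andP[/asboolP ? _]; rewrite in_setE.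
have G2JI : {subset seq.filter (predC p) G <= J `\` I}.
  move=> x; rewrite mem_filter /p /= => /andP[/asboolP ? /GK]; rewrite !in_setE.
  by move=> ?; split.
have := h1 _ (filter_uniq _ uG) F1G G1I; have := h2 _ (filter_uniq _ uG) F2G G2JI.
move=> hb' ha'; rewrite opprD addrACA.
apply: le_lt_trans (ler_normD _ _) _.
by rewrite (splitr e); apply: ltrD.
Qed.

Lemma ler_sum_subset_nneg (c : int -> R) (r G : seq int) : uniq r -> uniq G ->
  {subset r <= G} -> (forall j, j \in G -> 0 <= c j) ->
  \sum_(j <- r) c j <= \sum_(j <- G) c j.
Proof.
move=> ur uG rG c0; set p := fun j => j \in r.
rewrite -(perm_big _ (permEl (perm_filterC p G))) big_cat /=.
have -> : \sum_(j <- seq.filter p G) c j = \sum_(j <- r) c j.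
  apply: perm_big; apply: uniq_perm; rewrite ?filter_uniq //.
  by move=> x; rewrite mem_filter /p; case xr: (x \in r) => //=; rewrite rG.
rewrite lerDl big_seq; apply: sumr_ge0 => j.
by rewrite mem_filter => /andP[_ /c0].
Qed.

Lemma esum_rsum (K : set int) (c : int -> R) (s : R) :
  (forall j, K j -> 0 <= c j) -> has_rsum K c s ->
  (\esum_(j in K) (c j)%:E = s%:E)%E.
Proof.
move=> c0 hs; apply/eqP; rewrite eq_le; apply/andP; split.
- apply: ge_ereal_sup => _ [X [finX XK] <-].
  rewrite fsbig_finite // sumEFin lee_fin.
  set r := (X in \sum_(_ <- X) _).
  have rK : {subset r <= K}.
    by move=> x; rewrite /r in_fset_set // !in_setE => /XK.
  apply/ler_addgt0Pr => e e0.
  have [F0 [F0K h]] := hs e e0.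
  set G := undup (F0 ++ r).
  have GK : {subset G <= K}.
    by move=> x; rewrite mem_undup mem_cat => /orP[/F0K|/rK].
  have F0G : {subset F0 <= G} by move=> x xF; rewrite mem_undup mem_cat xF.
  have rG : {subset r <= G} by move=> x xF; rewrite mem_undup mem_cat xF orbT.
  have := h G (undup_uniq _) F0G GK.
  rewrite ltr_norml => /andP[hG _].
  apply: le_trans (ler_sum_subset_nneg (finmap.fset_uniq _) (undup_uniq _) rG _) _.
    by move=> j /GK; rewrite in_setE => /c0.
  lra.
- apply/lee_subgt0Pr => e e0.
  have [F0 [F0K h]] := hs e e0.
  apply: esum_ge; exists [set` undup F0].
    split; first exact: finite_seq.
    by move=> x /=; rewrite mem_undup => /F0K; rewrite in_setE.
  rewrite -fsbig_seq ?undup_uniq // sumEFin -EFinB lee_fin.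
  have : `|s - \sum_(j <- undup F0) c j| < e.
    apply: h; first exact: undup_uniq.
    + by move=> x xF; rewrite mem_undup.
    + by move=> x; rewrite mem_undup => /F0K.
  rewrite ltr_norml => /andP[_ ?]; lra.
Qed.

End RealUnconditionalSums.

Lemma has_usum_rip (R : realType) (V : lmodType R[i]) (ip : V -> V -> R[i])
  (ip_inner : is_inner_product ip) K F s y :
  has_usum ip K F s -> has_rsum K (fun j => rip ip (F j) y) (rip ip s y).
Proof.
move=> hu e e0; set n := ipnorm ip y.
have n0 : 0 <= n by apply: sqrtr_ge0.
have d0 : 0 < e / (1 + n) by rewrite divr_gt0 //; lra.
have [F0 [F0K h]] := hu _ d0; exists F0; split => // G uG FG GK.
rewrite -(rip_suml ip_inner) -(ripBl ip_inner).
apply: le_lt_trans (normr_rip_le ip_inner _ _) _.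
have := h G uG FG GK; set m := ipnorm ip _ => mlt.
have m0 : 0 <= m by apply: sqrtr_ge0.
have : m * (1 + n) < e by rewrite -ltr_pdivlMr //; lra.
rewrite -/n; nra.
Qed.

Section OrthogonalProjection.
Variables (R : realType) (V : lmodType R[i]) (ip : V -> V -> R[i]).
Hypothesis ip_inner : is_inner_product ip.
Variables (W : set V) (P : V -> V).
Hypothesis P_proj : is_orth_proj ip W P.

Lemma rip_projC a b : rip ip (P a) b = rip ip a (P b).
Proof.
have orth x y : rip ip (x - P x) (P y) = 0.
  by rewrite /rip (proj2 (P_proj x)) //; case: (P_proj y).
have e1 : rip ip (P a) b = rip ip (P a) (P b) + rip ip (b - P b) (P a).
  by rewrite (ripC ip_inner (_ - _)) -ripDr // addrC subrK.
have e2 : rip ip a (P b) = rip ip (P a) (P b) + rip ip (a - P a) (P b).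
  by rewrite -ripDl // addrC subrK.
by rewrite e1 e2 !orth.
Qed.

Lemma projD : {morph P : x y / x + y}.
Proof.
by move=> x y; apply: (rip_ext ip_inner) => z; rewrite !(ripDl ip_inner) !rip_projC ripDl.
Qed.

Lemma proj_orth0 x : (forall w, W w -> rip ip x w = 0) -> P x = 0.
Proof.
move=> xW; apply: (rip_ext ip_inner) => z.
by rewrite rip_projC xW ?rip0l //; case: (P_proj z).
Qed.

End OrthogonalProjection.

Section FrameOperator.
Variables (R : realType) (H : lmodType R[i]) (ip : H -> H -> R[i]).
Hypothesis ip_inner : is_inner_product ip.
Variables (J : set int) (Hj : int -> lmodType R[i]) (ipj : forall j, Hj j -> Hj j -> R[i]).
Arguments ipj : clear implicits.
Hypothesis ipj_inner : forall j, J j -> is_inner_product (ipj j).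
Variables (W : int -> set H) (P : int -> H -> H).
Hypothesis P_proj : forall j, J j -> is_orth_proj ip (W j) (P j).
Variables (L : forall j, {linear H -> Hj j}) (Ls : forall j, Hj j -> H).
Arguments L : clear implicits.
Arguments Ls : clear implicits.
Hypothesis Ls_adj : forall j, J j -> is_adjoint ip (ipj j) (L j) (Ls j).
Variables (v : int -> R) (S : H -> H).

Definition frame_term j (x : H) : H := rC (v j ^+ 2) *: P j (Ls j (L j (P j x))).

Definition frame_form j (x y : H) : R :=
  v j ^+ 2 * rip (ipj j) (L j (P j x)) (L j (P j y)).

Hypothesis S_frame : forall x, has_usum ip J (frame_term^~ x) (S x).

Lemma rip_frame_term j x y : J j -> rip ip (frame_term j x) y = frame_form j x y.
Proof.
move=> Jj; rewrite ripZl // (rip_projC ip_inner (P_proj Jj)) /frame_form.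
congr (_ * _); rewrite (ripC ip_inner) /rip -(Ls_adj Jj).
by case: (ipj_inner Jj) => _ ipJ _ _; rewrite ipJ ReJ.
Qed.

Lemma has_usum_frame_form K x s : K `<=` J -> has_usum ip K (frame_term^~ x) s ->
  forall y, has_rsum K (fun j => frame_form j x y) (rip ip s y).
Proof.
move=> KJ hs y; apply: eq_rsum (has_usum_rip ip_inner y hs).
by move=> j Kj; apply: rip_frame_term; apply: KJ.
Qed.

Lemma esum_frame_norm K x s : K `<=` J -> has_usum ip K (frame_term^~ x) s ->
  (\esum_(j in K) ((v j ^+ 2 * ipnorm (ipj j) (L j (P j x)) ^+ 2)%:E) = (rip ip s x)%:E)%E.
Proof.
move=> KJ hs.
rewrite (@eq_esum _ _ K _ (fun j => (frame_form j x x)%:E)); last first.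
  by move=> j /KJ Jj; rewrite (ipnorm2 (ipj_inner Jj)).
apply: esum_rsum _ (has_usum_frame_form KJ hs x) => j /KJ Jj.
by rewrite mulr_ge0 ?sqr_ge0 // rip_ge0 //; apply: ipj_inner.
Qed.

Lemma frame_setD I x m m' : I `<=` J ->
  has_usum ip I (frame_term^~ x) m -> has_usum ip (J `\` I) (frame_term^~ x) m' ->
  S x = m + m'.
Proof.
move=> IJ hm hm'; have IcJ : J `\` I `<=` J by move=> j [].
apply: (rip_ext ip_inner) => y; rewrite (ripDl ip_inner).
apply: (rsum_unique (has_usum_frame_form (@subset_refl _ J) (S_frame x) y)).
exact: rsum_setD IJ (has_usum_frame_form IJ hm y) (has_usum_frame_form IcJ hm' y).
Qed.

Lemma frameD : {morph S : x y / x + y}.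
Proof.
move=> x x'; apply: (rip_ext ip_inner) => y; rewrite (ripDl ip_inner).
have Sxy := rsumD (has_usum_frame_form (@subset_refl _ J) (S_frame x) y)
                  (has_usum_frame_form (@subset_refl _ J) (S_frame x') y).
apply: (rsum_unique (has_usum_frame_form (@subset_refl _ J) (S_frame (x + x')) y)).
apply: eq_rsum Sxy => j Jj.
by rewrite /frame_form (projD ip_inner (P_proj Jj)) linearD (ripDl (ipj_inner Jj)) mulrDr.
Qed.

Lemma rip_frameC x y : rip ip (S x) y = rip ip x (S y).
Proof.
rewrite (ripC ip_inner x).
apply: (rsum_unique (has_usum_frame_form (@subset_refl _ J) (S_frame x) y)).
apply: eq_rsum (has_usum_frame_form (@subset_refl _ J) (S_frame y) x) => j Jj.
by rewrite /frame_form (ripC (ipj_inner Jj)).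
Qed.

Variables (Sinv : H -> H) (Pt : int -> H -> H).
Hypotheses (SK : cancel S Sinv) (SinvK : cancel Sinv S).
Hypothesis Pt_proj : forall j, J j -> is_orth_proj ip (Sinv @` W j) (Pt j).

Lemma frame_invD : {morph Sinv : x y / x + y}.
Proof. by move=> x y; apply: (can_inj SK); rewrite frameD !SinvK. Qed.

Lemma rip_frame_invC x y : rip ip (Sinv x) y = rip ip x (Sinv y).
Proof. by rewrite -{1}[y]SinvK -rip_frameC SinvK. Qed.

Lemma proj_frame_inv_dual j z : J j -> P j (Sinv (Pt j z)) = P j (Sinv z).
Proof.
move=> Jj; rewrite -[in RHS](subrK (Pt j z) z) frame_invD.
rewrite (projD ip_inner (P_proj Jj)) [X in X + _](proj_orth0 ip_inner (P_proj Jj)) ?add0r //.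
by move=> w Ww; rewrite rip_frame_invC /rip (proj2 (Pt_proj Jj z)) //; exists w.
Qed.

Lemma esum_frame_inv_dual_norm z :
  (\esum_(j in J)
     ((v j ^+ 2 * ipnorm (ipj j) (L j (P j (Sinv (Pt j z)))) ^+ 2)%:E)
   = (rip ip z (Sinv z))%:E)%E.
Proof.
rewrite (@eq_esum _ _ J _ (fun j => (v j ^+ 2 * ipnorm (ipj j) (L j (P j (Sinv z))) ^+ 2)%:E)).
  by rewrite (esum_frame_norm (@subset_refl _ J) (S_frame (Sinv z))) SinvK.
by move=> j Jj; rewrite proj_frame_inv_dual.
Qed.

Lemma rip_frame_inv_cross a b :
  rip ip a (Sinv (a + b)) - rip ip a (Sinv a) = rip ip b (Sinv (a + b)) - rip ip b (Sinv b).
Proof.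
have sym : rip ip a (Sinv b) = rip ip b (Sinv a).
  by rewrite (ripC ip_inner b) -rip_frame_invC (ripC ip_inner).
rewrite frame_invD !(ripDr ip_inner); lra.
Qed.

End FrameOperator.

Unset Implicit Arguments.

Theorem theorem3p5
  (R : realType) (H : lmodType R[i]) (ip : H -> H -> R[i])
  (HH : separable_hilbert ip)
  (J : set int)
  (Hj : int -> lmodType R[i]) (ipj : forall j, Hj j -> Hj j -> R[i])
  (HHj : forall j, J j -> separable_hilbert (ipj j))
  (W : int -> set H) (HW : forall j, J j -> closed_subspace ip (W j))
  (P : int -> H -> H) (HP : forall j, J j -> is_orth_proj ip (W j) (P j))
  (L : forall j, {linear H -> Hj j})
  (HLb : forall j, J j -> bounded_op ip (ipj j) (L j))
  (Ls : forall j, Hj j -> H)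
  (HLs : forall j, J j -> is_adjoint ip (ipj j) (L j) (Ls j))
  (v : int -> R) (Hv : forall j, J j -> 0 < v j)
  (Hframe : g_fusion_frame ip ipj J P (fun j => L j : H -> Hj j) v)
  (S : H -> H)
  (HS : forall f : H,
      has_usum ip J (fun j => rC (v j ^+ 2) *: P j (Ls j (L j (P j f)))) (S f))
  (Sinv : H -> H) (HSinv : cancel S Sinv /\ cancel Sinv S)
  (Pt : int -> H -> H)
  (HPt : forall j, J j -> is_orth_proj ip (Sinv @` W j) (Pt j))
  (I : set int) (HI : I `<=` J)
  (MI MIc : H -> H)
  (HMI : forall f : H,
      has_usum ip I (fun j => rC (v j ^+ 2) *: P j (Ls j (L j (P j f)))) (MI f))
  (HMIc : forall f : H,
      has_usum ip (J `\` I) (fun j => rC (v j ^+ 2) *: P j (Ls j (L j (P j f)))) (MIc f))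
  (f : H) :
  (\esum_(j in I) ((v j ^+ 2 * ipnorm (ipj j) (L j (P j f)) ^+ 2)%:E)
   - \esum_(j in J)
       ((v j ^+ 2 * ipnorm (ipj j) (L j (P j (Sinv (Pt j (MI f))))) ^+ 2)%:E)
  = \esum_(j in J `\` I) ((v j ^+ 2 * ipnorm (ipj j) (L j (P j f)) ^+ 2)%:E)
   - \esum_(j in J)
       ((v j ^+ 2 * ipnorm (ipj j) (L j (P j (Sinv (Pt j (MIc f))))) ^+ 2)%:E))%E.
Proof.
have ip_inner : is_inner_product ip by case: HH.
have ipj_inner j : J j -> is_inner_product (ipj j) by case/HHj.
have [SK SinvK] := HSinv.
have IcJ : J `\` I `<=` J by move=> j [].
have Sf : S f = MI f + MIc f.
  exact: (frame_setD ip_inner ipj_inner HP HLs HS HI (HMI f) (HMIc f)).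
rewrite (esum_frame_norm ip_inner ipj_inner HP HLs HI (HMI f)).
rewrite (esum_frame_norm ip_inner ipj_inner HP HLs IcJ (HMIc f)).
rewrite !(esum_frame_inv_dual_norm ip_inner ipj_inner HP HLs HS SK SinvK HPt).
rewrite -!EFinB; congr EFin.
have := rip_frame_inv_cross ip_inner ipj_inner HP HLs HS SK SinvK (MI f) (MIc f).
by rewrite -Sf SK.
Qed.
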